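(* Let $\Lambda$ be a row-finite $2$-graph with no sources. Suppose that for every vertex $v\in\Lambda^0$ there is a vertex $u\in\Lambda^0$ with $v\Lambda u\neq\emptyset$ at which there is an aperiodic quartet (that is, an $(a,b)$-aperiodic quartet for some positive integers $a,b$). Then $\Lambda$ is aperiodic.
   Context: A $k$-graph is a countable category $\Lambda$ with a functor $d:\Lambda\to\mathbb{N}^k$ satisfying the factorization property: whenever $d(\lambda)=m+n$ there are unique $\mu,\nu$ with $\lambda=\mu\nu$, $d(\mu)=m$, $d(\nu)=n$. $\Lambda^n=d^{-1}(n)$, $\Lambda^0$ the vertices, $r,s$ range and source, $v\Lambda=\{\lambda:r(\lambda)=v\}$, $v\Lambda^n w=\{\lambda: r(\lambda)=v,d(\lambda)=n,s(\lambda)=w\}$, $v\Lambda w$ the union over $n$. Row-finite: each $v\Lambda^n$ finite; no sources: $v\Lambda^{e_i}\ne\emptyset$ for all $v,i$. For $0\le m\le n\le d(\lambda)$, $\lambda(m,n)$ is the unique path with $\lambda=\lambda'\lambda(m,n)\lambda''$, $d(\lambda')=m$, $d(\lambda(m,n))=n-m$. $\Lambda$ has no local periodicity at $v$ if for each $m\neq n\in\mathbb{N}^k$ there is $\lambda\in v\Lambda$ with $d(\lambda)\ge m\vee n$ and $\lambda(m,m+d(\lambda)-(m\vee n))\neq\lambda(n,n+d(\lambda)-(m\vee n))$; $\Lambda$ is aperiodic if it has no local periodicity at every vertex. For positive integers $a,b$, an $(a,b)$-aperiodic quartet at $u$ is $(\alpha_1,\alpha_2,\beta_1,\beta_2)$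 with $\alpha_1\neq\alpha_2$ in $u\Lambda^{ae_1}u$, $\beta_1\neq\beta_2$ in $u\Lambda^{be_2}u$, and $\beta_2\alpha_1=\alpha_1\beta_2$, $\beta_2\alpha_2=\alpha_2\beta_2$, $\beta_1\alpha_1=\alpha_2\beta_1$, $\beta_1\alpha_2=\alpha_1\beta_1$. *)

From Stdlib Require Import Arith Lia List.

Definition dadd (m n : nat * nat) : nat * nat := (fst m + fst n, snd m + snd n).
Definition dsub (m n : nat * nat) : nat * nat := (fst m - fst n, snd m - snd n).
Definition dle (m n : nat * nat) : Prop := fst m <= fst n /\ snd m <= snd n.
Definition djoin (m n : nat * nat) : nat * nat := (max (fst m) (fst n), max (snd m) (snd n)).
Definition d0 : nat * nat := (0, 0).
Definition e1 : nat * nat := (1, 0).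
Definition e2 : nat * nat := (0, 1).

(* A 2-graph: a countable category (objects Obj, morphisms Mor, range = codomain,
   source = domain, composition cmp mu nu = "mu nu" defined when src mu = rng nu)
   with a functor deg : Mor -> N^2 satisfying the unique factorization property. *)
Record TwoGraph := {
  Obj : Type;
  Mor : Type;
  rng : Mor -> Obj;
  src : Mor -> Obj;
  idm : Obj -> Mor;
  cmp : Mor -> Mor -> Mor;
  deg : Mor -> nat * nat;
  mor_countable : exists f : Mor -> nat, forall x y, f x = f y -> x = y;
  rng_idm : forall v, rng (idm v) = v;
  src_idm : forall v, src (idm v) = v;
  rng_cmp : forall mu nu, src mu = rng nu -> rng (cmp mu nu) = rng mu;
  src_cmp : forall mu nu, src mu = rng nu -> src (cmp mu nu) = src nu;
  cmp_idl : forall l, cmp (idm (rng l)) l = l;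
  cmp_idr : forall l, cmp l (idm (src l)) = l;
  cmp_assoc : forall l mu nu, src l = rng mu -> src mu = rng nu ->
      cmp l (cmp mu nu) = cmp (cmp l mu) nu;
  deg_idm : forall v, deg (idm v) = d0;
  deg_cmp : forall mu nu, src mu = rng nu -> deg (cmp mu nu) = dadd (deg mu) (deg nu);
  factorization : forall l m n, deg l = dadd m n ->
      exists mu nu, (src mu = rng nu /\ l = cmp mu nu /\ deg mu = m /\ deg nu = n) /\
        forall mu' nu', src mu' = rng nu' -> l = cmp mu' nu' -> deg mu' = m -> deg nu' = n ->
          mu' = mu /\ nu' = nu
}.

Arguments rng {_} _.
Arguments src {_} _.
Arguments idm {_} _.
Arguments cmp {_} _ _.
Arguments deg {_} _.

Section TwoGraphNotions.
Variable L : TwoGraph.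

Definition row_finite : Prop :=
  forall (v : Obj L) (n : nat * nat), exists s : list (Mor L),
    forall l, rng l = v -> deg l = n -> In l s.

Definition no_sources : Prop :=
  forall v : Obj L,
    (exists l, rng l = v /\ deg l = e1) /\ (exists l, rng l = v /\ deg l = e2).

(* seg l m n sg : sg = l(m,n), i.e. l = l' sg l'' with d(l') = m, d(sg) = n - m *)
Definition seg (l : Mor L) (m n : nat * nat) (sg : Mor L) : Prop :=
  exists l' l'', src l' = rng sg /\ src sg = rng l'' /\
    l = cmp l' (cmp sg l'') /\ deg l' = m /\ deg sg = dsub n m.

Definition no_local_periodicity_at (v : Obj L) : Prop :=
  forall m n : nat * nat, m <> n ->
    exists l, rng l = v /\ dle (djoin m n) (deg l) /\
      exists sg tau,
        seg l m (dsub (dadd m (deg l)) (djoin m n)) sg /\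
        seg l n (dsub (dadd n (deg l)) (djoin m n)) tau /\
        sg <> tau.

Definition aperiodic : Prop := forall v : Obj L, no_local_periodicity_at v.

Definition aperiodic_quartet (a b : nat) (u : Obj L)
    (al1 al2 be1 be2 : Mor L) : Prop :=
  0 < a /\ 0 < b /\
  (rng al1 = u /\ src al1 = u /\ deg al1 = (a, 0)) /\
  (rng al2 = u /\ src al2 = u /\ deg al2 = (a, 0)) /\
  (rng be1 = u /\ src be1 = u /\ deg be1 = (0, b)) /\
  (rng be2 = u /\ src be2 = u /\ deg be2 = (0, b)) /\
  al1 <> al2 /\ be1 <> be2 /\
  cmp be2 al1 = cmp al1 be2 /\ cmp be2 al2 = cmp al2 be2 /\
  cmp be1 al1 = cmp al2 be1 /\ cmp be1 al2 = cmp al1 be1.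

Definition has_aperiodic_quartet (u : Obj L) : Prop :=
  exists a b al1 al2 be1 be2, aperiodic_quartet a b u al1 al2 be1 be2.

End TwoGraphNotions.

(* Let D = d(λ) - m ∨ n. If λ(m, m + D) = λ(n, n + D), then every window of λ
   at position m + p coincides with the window of the same shape at n + p, and
   chaining J such shifts, the window at c + J m coincides with the one at c + J n.
   So it suffices to exhibit, for m ≠ n, a path from v with different windows at
   c + ab m and c + ab n. Prefix a path from v to the quartet vertex u, where
   ab m = (b m1 ⋅ a, a m2 ⋅ b) is a point of the (a, b)-grid.
   If m1 ≠ n1, use an α-word with a single α2 in column b m1, followed by a power
   of β2: as β2 commutes with α1 and α2, the α-edge at grid point (i, j) is the
   i-th letter, so the windows read α2 and α1.
   If m1 = n1, use α1^(b m1) · (β1-word with a single β2 in row a m2) · α1^N: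
   the windows read β2 and β1. *)

From Stdlib Require Import Arith Lia List.

Set Implicit Arguments.
Unset Strict Implicit.

Definition dscale (k : nat) (m : nat * nat) : nat * nat := (k * fst m, k * snd m).

Ltac deg_arith :=
  unfold dadd, dsub, dle, djoin, dscale, d0 in *; cbn [fst snd] in *;
  repeat match goal with H : (_, _) = (_, _) |- _ => injection H as H ?H end;
  try (apply injective_projections; cbn [fst snd]); nia.

Ltac composable :=
  repeat first
    [ congruence | rewrite rng_cmp | rewrite src_cmp
    | match goal with H : context [rng (cmp _ _)] |- _ => rewrite rng_cmp in H end
    | match goal with H : context [src (cmp _ _)] |- _ => rewrite src_cmp in H end ].

Section Segments.
Variable L : TwoGraph.

Lemma cmp_factor_unique (x y x' y' : Mor L) :
  src x = rng y -> src x' = rng y' -> cmp x y = cmp x' y' -> deg x = deg x' ->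
  x = x' /\ y = y'.
Proof.
  intros Hxy Hxy' E D.
  destruct (factorization L (cmp x y) (deg x) (deg y) (deg_cmp L x y Hxy))
    as [mu [nu [_ U]]].
  assert (Dy : deg y' = deg y).
  { pose proof (deg_cmp L x y Hxy) as D1. pose proof (deg_cmp L x' y' Hxy') as D2.
    rewrite <- E, D1, D in D2. deg_arith. }
  destruct (U x y Hxy eq_refl eq_refl eq_refl).
  destruct (U x' y' Hxy' E (eq_sym D) Dy).
  split; congruence.
Qed.

Lemma seg_eq (l w : Mor L) m n m' n' :
  seg L l m n w -> m = m' -> n = n' -> seg L l m' n' w.
Proof. intros ? -> ->; assumption. Qed.

Lemma deg_seg (l w : Mor L) m n : seg L l m n w -> deg w = dsub n m.
Proof. intros (? & ? & ? & ? & ? & ? & D); exact D. Qed.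

Lemma seg_unique (l s1 s2 : Mor L) m n : seg L l m n s1 -> seg L l m n s2 -> s1 = s2.
Proof.
  intros (a1 & c1 & Ha1 & Hc1 & -> & Da1 & Ds1) (a2 & c2 & Ha2 & Hc2 & E & Da2 & Ds2).
  destruct (@cmp_factor_unique a1 (cmp s1 c1) a2 (cmp s2 c2)) as [_ E']; try composable.
  apply (cmp_factor_unique Hc1 Hc2 E'); congruence.
Qed.

Lemma seg_exists (l : Mor L) m n : dle m n -> dle n (deg l) -> exists s, seg L l m n s.
Proof.
  intros Hmn Hn.
  assert (D : deg l = dadd m (dsub (deg l) m)) by deg_arith.
  destruct (factorization L l _ _ D) as (mu & nu & (Hs & El & Dm & Dn) & _).
  assert (D' : deg nu = dadd (dsub n m) (dsub (deg l) n)) by (rewrite Dn; deg_arith).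
  destruct (factorization L nu _ _ D') as (s & c & (Hs' & En & Ds & Dc) & _).
  exists s, mu, c. repeat split; try congruence.
  rewrite Hs, En, rng_cmp; auto.
Qed.

Lemma seg_trans (l s w : Mor L) m n r t :
  seg L l m n s -> seg L s r t w -> seg L l (dadd m r) (dadd m t) w.
Proof.
  intros (l1 & c1 & Hl1 & Hc1 & -> & Dl1 & Ds) (s1 & c2 & Hs1 & Hc2 & -> & Ds1 & Dw).
  exists (cmp l1 s1), (cmp c2 c1). repeat split.
  - composable.
  - composable.
  - rewrite <- (cmp_assoc L s1 (cmp w c2) c1), <- (cmp_assoc L w c2 c1),
      (cmp_assoc L l1 s1); composable.
  - rewrite deg_cmp; composable.
  - rewrite Dw; deg_arith.
Qed.

Lemma seg_cmpl (mu z w : Mor L) r t :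
  src mu = rng z -> seg L z r t w -> seg L (cmp mu z) (dadd (deg mu) r) (dadd (deg mu) t) w.
Proof.
  intros Hmu (z1 & z2 & Hz1 & Hz2 & -> & Dz1 & Dw).
  exists (cmp mu z1), z2. repeat split; auto.
  - composable.
  - rewrite cmp_assoc; composable.
  - rewrite deg_cmp; composable.
  - rewrite Dw; deg_arith.
Qed.

Lemma seg_cmpr (z q w : Mor L) r t :
  src z = rng q -> seg L z r t w -> seg L (cmp z q) r t w.
Proof.
  intros Hq (z1 & z2 & Hz1 & Hz2 & -> & Dz1 & Dw).
  exists z1, (cmp z2 q). repeat split; auto.
  - composable.
  - rewrite <- !cmp_assoc; composable.
Qed.

End Segments.

Section Periodicity.
Variable L : TwoGraph.

Lemma seg_shift (l sg w : Mor L) m n D p e :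
  seg L l m (dadd m D) sg -> seg L l n (dadd n D) sg -> dle (dadd p e) D ->
  seg L l (dadd m p) (dadd (dadd m p) e) w -> seg L l (dadd n p) (dadd (dadd n p) e) w.
Proof.
  intros Hm Hn Hpe Hw.
  assert (Dsg : deg sg = D) by (rewrite (deg_seg Hm); deg_arith).
  destruct (@seg_exists _ sg p (dadd p e)) as [w' Hw']; [deg_arith | rewrite Dsg; exact Hpe |].
  assert (w' = w) as ->.
  { apply (seg_unique (seg_trans Hm Hw')). apply (seg_eq Hw); deg_arith. }
  apply (seg_eq (seg_trans Hn Hw')); deg_arith.
Qed.

Lemma dscale_le_join J m n :
  dle (dscale J m) (dscale J (djoin m n)) /\ dle (dscale J n) (dscale J (djoin m n)).
Proof.
  unfold dle, dscale, djoin; cbn [fst snd].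
  repeat split; apply Nat.mul_le_mono_l; lia.
Qed.

Lemma seg_shift_iter (l sg w : Mor L) m n D e J c :
  seg L l m (dadd m D) sg -> seg L l n (dadd n D) sg ->
  dle (dadd (dadd c (dscale J (djoin m n))) e) D ->
  seg L l (dadd c (dscale J m)) (dadd (dadd c (dscale J m)) e) w ->
  seg L l (dadd c (dscale J n)) (dadd (dadd c (dscale J n)) e) w.
Proof.
  intros Hm Hn. revert c. induction J as [|J IH]; intros c Hb Hw.
  - apply (seg_eq Hw); deg_arith.
  - pose proof (dscale_le_join J m n).
    assert (Hw' := IH (dadd c m) ltac:(deg_arith) ltac:(apply (seg_eq Hw); deg_arith)).
    assert (Hw'' := seg_shift (p := dadd c (dscale J n)) (e := e) Hm Hn ltac:(deg_arith)
                      ltac:(apply (seg_eq Hw'); deg_arith)).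
    apply (seg_eq Hw''); deg_arith.
Qed.

Definition shifted_windows_differ (l : Mor L) (m n : nat * nat) : Prop :=
  exists c J e (w1 w2 : Mor L),
    dle (dadd (dadd c (dscale (S J) (djoin m n))) e) (deg l) /\
    seg L l (dadd c (dscale J m)) (dadd (dadd c (dscale J m)) e) w1 /\
    seg L l (dadd c (dscale J n)) (dadd (dadd c (dscale J n)) e) w2 /\
    w1 <> w2.

Lemma shifted_windows_differ_cmpl (mu z : Mor L) m n :
  src mu = rng z -> shifted_windows_differ z m n -> shifted_windows_differ (cmp mu z) m n.
Proof.
  intros Hmu (c & J & e & w1 & w2 & Hb & Hw1 & Hw2 & Hne).
  exists (dadd (deg mu) c), J, e, w1, w2. refine (conj _ (conj _ (conj _ Hne))).
  - rewrite deg_cmp by exact Hmu. deg_arith.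
  - apply (seg_eq (seg_cmpl Hmu Hw1)); deg_arith.
  - apply (seg_eq (seg_cmpl Hmu Hw2)); deg_arith.
Qed.

Lemma shifted_windows_differ_periodicity (l : Mor L) m n :
  shifted_windows_differ l m n ->
  dle (djoin m n) (deg l) /\
  exists sg tau,
    seg L l m (dsub (dadd m (deg l)) (djoin m n)) sg /\
    seg L l n (dsub (dadd n (deg l)) (djoin m n)) tau /\ sg <> tau.
Proof.
  intros (c & J & e & w1 & w2 & Hb & Hw1 & Hw2 & Hne).
  pose proof (dscale_le_join (S J) m n).
  assert (Hjoin : dle (djoin m n) (deg l)) by deg_arith.
  destruct (@seg_exists _ l m (dadd m (dsub (deg l) (djoin m n)))) as [sg Hsg];
    [deg_arith | deg_arith |].
  destruct (@seg_exists _ l n (dadd n (dsub (deg l) (djoin m n)))) as [tau Htau];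
    [deg_arith | deg_arith |].
  split; [exact Hjoin |].
  exists sg, tau. split; [apply (seg_eq Hsg); deg_arith |].
  split; [apply (seg_eq Htau); deg_arith |].
  intros <-.
  refine (Hne (seg_unique (seg_shift_iter (c := c) (J := J) (e := e) Hsg Htau _ Hw1) Hw2)).
  deg_arith.
Qed.

End Periodicity.

Lemma Forall_repeat A (P : A -> Prop) x N : P x -> Forall P (repeat x N).
Proof. intros Hx. induction N; constructor; auto. Qed.

Section LoopWords.
Variables (L : TwoGraph) (u : Obj L).

Definition loop (x : Mor L) : Prop := rng x = u /\ src x = u.

Fixpoint cmps (xs : list (Mor L)) : Mor L :=
  match xs with nil => idm u | x :: xs => cmp x (cmps xs) end.

Lemma loop_cmp x y : loop x -> loop y -> loop (cmp x y).
Proof. intros [] []; split; composable. Qed.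

Lemma loop_cmps xs : Forall loop xs -> loop (cmps xs).
Proof.
  induction 1 as [|x xs Hx _ IH]; cbn; [split; auto using rng_idm, src_idm |].
  exact (loop_cmp Hx IH).
Qed.

Lemma cmp_assoc_loop x y z : loop x -> loop y -> loop z ->
  cmp x (cmp y z) = cmp (cmp x y) z.
Proof. intros [] [] []. apply cmp_assoc; congruence. Qed.

Lemma cmps_app xs ys : Forall loop xs -> Forall loop ys ->
  cmps (xs ++ ys) = cmp (cmps xs) (cmps ys).
Proof.
  intros Hxs Hys. induction Hxs as [|x xs Hx Hxs IH]; cbn.
  - destruct (loop_cmps Hys) as [Hr _]. rewrite <- Hr at 1. apply eq_sym, cmp_idl.
  - rewrite IH. apply cmp_assoc_loop; auto using loop_cmps.
Qed.

Lemma deg_cmps xs d : Forall loop xs -> Forall (fun x => deg x = d) xs ->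
  deg (cmps xs) = dscale (length xs) d.
Proof.
  intros Hl Hd. induction Hl as [|x xs Hx Hl IH]; cbn.
  - rewrite deg_idm. deg_arith.
  - apply Forall_cons_iff in Hd as [Dx Dxs].
    destruct Hx as [_ Hx], (loop_cmps Hl) as [Hr _].
    rewrite deg_cmp, IH, Dx by congruence. deg_arith.
Qed.

Lemma cmps_comm y xs : loop y -> Forall loop xs ->
  Forall (fun x => cmp y x = cmp x y) xs -> cmp y (cmps xs) = cmp (cmps xs) y.
Proof.
  intros Hy Hl Hc. induction Hl as [|x xs Hx Hl IH]; cbn.
  - destruct Hy as [Hr Hs]. rewrite <- Hr at 2. rewrite <- Hs at 1.
    rewrite cmp_idl, cmp_idr. reflexivity.
  - apply Forall_cons_iff in Hc as [Cx Cxs].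
    rewrite cmp_assoc_loop, Cx, <- cmp_assoc_loop, IH, cmp_assoc_loop;
      auto using loop_cmps.
Qed.

Lemma seg_cmps_nth xs d j x0 : Forall loop xs -> Forall (fun x => deg x = d) xs ->
  j < length xs -> seg L (cmps xs) (dscale j d) (dscale (S j) d) (nth j xs x0).
Proof.
  intros Hl Hd Hj.
  destruct (nth_split xs x0 Hj) as (l1 & l2 & Exs & Hl1).
  rewrite Exs in Hl, Hd. rewrite Exs at 1.
  apply Forall_app in Hl as [Hl1' [Hx Hl2]%Forall_cons_iff].
  apply Forall_app in Hd as [Hd1 [Dx _]%Forall_cons_iff].
  exists (cmps l1), (cmps l2).
  refine (conj _ (conj _ (conj _ (conj _ _)))).
  - destruct Hx, (loop_cmps Hl1'); congruence.
  - destruct Hx, (loop_cmps Hl2); congruence.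
  - rewrite cmps_app; auto.
  - rewrite <- Hl1. apply deg_cmps; auto.
  - rewrite Dx, <- Hl1. deg_arith.
Qed.

Lemma seg_cmps_repeat_comm xs y da db N i j x0 :
  Forall loop xs -> Forall (fun x => deg x = da) xs -> loop y -> deg y = db ->
  Forall (fun x => cmp y x = cmp x y) xs -> i < length xs -> j <= N ->
  seg L (cmp (cmps xs) (cmps (repeat y N)))
    (dadd (dscale j db) (dscale i da)) (dadd (dscale j db) (dscale (S i) da)) (nth i xs x0).
Proof.
  intros Hl Hd Hy Dy Hc Hi Hj.
  assert (HY : forall k, loop (cmps (repeat y k))) by (intros; apply loop_cmps, Forall_repeat, Hy).
  assert (HX := loop_cmps Hl).
  replace N with (j + (N - j)) by lia.
  rewrite repeat_app, cmps_app by apply Forall_repeat, Hy.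
  assert (Hcomm : cmp (cmps xs) (cmps (repeat y j)) = cmp (cmps (repeat y j)) (cmps xs)).
  { apply cmps_comm, Forall_repeat, eq_sym, cmps_comm; auto using Forall_repeat. }
  rewrite cmp_assoc_loop, Hcomm, <- cmp_assoc_loop by auto.
  assert (DY : deg (cmps (repeat y j)) = dscale j db).
  { rewrite (deg_cmps (d := db)), repeat_length; auto using Forall_repeat. }
  rewrite <- DY.
  destruct (HY j) as [_ Hs], (HY (N - j)) as [Hr _], HX as [HXr HXs].
  apply seg_cmpl; [composable |].
  apply seg_cmpr; [composable |].
  apply seg_cmps_nth; auto.
Qed.

End LoopWords.

Lemma Forall_map_ifb A (P : A -> Prop) (f : nat -> bool) x1 x2 l :
  P x1 -> P x2 -> Forall P (map (fun k => if f k then x2 else x1) l).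
Proof.
  intros H1 H2. apply Forall_map, Forall_forall. intros k _. destruct (f k); assumption.
Qed.

Lemma nth_map_seq A (f : nat -> A) N i : i < N -> nth i (map f (seq 0 N)) (f 0) = f i.
Proof. intros Hi. rewrite map_nth, seq_nth; auto. Qed.

Lemma window_arith a b M k : 0 < a -> 0 < b -> k <= M ->
  a * k < S (S (a * b) * M) /\ b * k < S (S (a * b) * M) /\
  S (a * b) * k + a <= S (S (a * b) * M) * a /\ S (a * b) * k + b <= S (S (a * b) * M) * b.
Proof.
  intros Ha Hb Hk.
  assert (S (a * b) * k <= S (a * b) * M) by (apply Nat.mul_le_mono_l, Hk).
  repeat split; nia.
Qed.

Section Separation.
Variables (L : TwoGraph) (u : Obj L) (a b : nat).
Hypotheses (Ha : 0 < a) (Hb : 0 < b).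

Lemma windows_differ_horizontal (x1 x2 y : Mor L) m n :
  loop u x1 -> loop u x2 -> loop u y -> deg x1 = (a, 0) -> deg x2 = (a, 0) -> deg y = (0, b) ->
  cmp y x1 = cmp x1 y -> cmp y x2 = cmp x2 y -> x1 <> x2 -> fst m <> fst n ->
  exists z, loop u z /\ shifted_windows_differ z m n.
Proof.
  intros Hx1 Hx2 Hy Dx1 Dx2 Dy C1 C2 Hne Hmn.
  set (M := fst m + snd m + fst n + snd n).
  set (N := S (S (a * b) * M)).
  set (letter := fun k => if k =? b * fst m then x2 else x1).
  set (xs := map letter (seq 0 N)).
  set (z := cmp (cmps u xs) (cmps u (repeat y N))).
  assert (Hl : Forall (loop u) xs) by (apply Forall_map_ifb; assumption).
  assert (Hd : Forall (fun x => deg x = (a, 0)) xs) by (apply Forall_map_ifb; assumption).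
  assert (Hc : Forall (fun x => cmp y x = cmp x y) xs) by (apply Forall_map_ifb; assumption).
  assert (Hlen : length xs = N) by (unfold xs; rewrite length_map, length_seq; reflexivity).
  assert (Hwin : forall k, fst k + snd k <= M ->
    seg L z (dadd d0 (dscale (a * b) k)) (dadd (dadd d0 (dscale (a * b) k)) (a, 0))
      (letter (b * fst k))).
  { intros k Hk.
    destruct (window_arith Ha Hb (k := fst k) (M := M) ltac:(lia)) as (_ & Hi & _).
    destruct (window_arith Ha Hb (k := snd k) (M := M) ltac:(lia)) as (Hj & _).
    rewrite <- (nth_map_seq letter (N := N) Hi).
    apply (seg_eq (seg_cmps_repeat_comm (i := b * fst k) (j := a * snd k) (letter 0)
                     Hl Hd Hy Dy Hc ltac:(lia) (Nat.lt_le_incl _ _ Hj))); deg_arith. }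
  exists z. split; [apply loop_cmp; apply loop_cmps; auto using Forall_repeat |].
  exists d0, (a * b), (a, 0), (letter (b * fst m)), (letter (b * fst n)).
  refine (conj _ (conj (Hwin m ltac:(lia)) (conj (Hwin n ltac:(lia)) _))).
  - destruct (loop_cmps Hl) as [_ Hs], (loop_cmps (Forall_repeat N Hy)) as [Hr _].
    unfold z. rewrite deg_cmp, (deg_cmps (d := (a, 0))), (deg_cmps (d := (0, b))), Hlen,
      repeat_length by (auto using Forall_repeat; congruence).
    destruct (window_arith Ha Hb (k := Nat.max (fst m) (fst n)) (M := M) ltac:(lia))
      as (_ & _ & B1 & _).
    destruct (window_arith Ha Hb (k := Nat.max (snd m) (snd n)) (M := M) ltac:(lia))
      as (_ & _ & _ & B2).
    unfold N. deg_arith.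
  - unfold letter. rewrite Nat.eqb_refl.
    replace (b * fst n =? b * fst m) with false; [exact (not_eq_sym Hne) |].
    symmetry. apply Nat.eqb_neq. intros E. apply Hmn, (Nat.mul_cancel_l _ _ b); lia.
Qed.

Lemma windows_differ_vertical (x y1 y2 : Mor L) m n :
  loop u x -> loop u y1 -> loop u y2 -> deg x = (a, 0) -> deg y1 = (0, b) -> deg y2 = (0, b) ->
  y1 <> y2 -> fst m = fst n -> snd m <> snd n ->
  exists z, loop u z /\ shifted_windows_differ z m n.
Proof.
  intros Hx Hy1 Hy2 Dx Dy1 Dy2 Hne Hm1 Hm2.
  set (M := fst m + snd m + fst n + snd n).
  set (N := S (S (a * b) * M)).
  set (i := b * fst m).
  set (letter := fun k => if k =? a * snd m then y2 else y1).
  set (ys := map letter (seq 0 N)).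
  set (z := cmp (cmps u (repeat x i)) (cmp (cmps u ys) (cmps u (repeat x N)))).
  assert (Hl : Forall (loop u) ys) by (apply Forall_map_ifb; assumption).
  assert (Hd : Forall (fun x => deg x = (0, b)) ys) by (apply Forall_map_ifb; assumption).
  assert (Hlen : length ys = N) by (unfold ys; rewrite length_map, length_seq; reflexivity).
  assert (HX : forall k, loop u (cmps u (repeat x k)))
    by (intros; apply loop_cmps, Forall_repeat, Hx).
  assert (DX : forall k, deg (cmps u (repeat x k)) = dscale k (a, 0))
    by (intros; rewrite (deg_cmps (d := (a, 0))), repeat_length; auto using Forall_repeat).
  destruct (HX i) as [_ HXs], (HX N) as [HXr _], (loop_cmps Hl) as [HYr HYs].
  assert (Hwin : forall k, fst k = fst m -> fst k + snd k <= M ->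
    seg L z (dadd d0 (dscale (a * b) k)) (dadd (dadd d0 (dscale (a * b) k)) (0, b))
      (letter (a * snd k))).
  { intros k Hk1 Hk.
    destruct (window_arith Ha Hb (k := snd k) (M := M) ltac:(lia)) as (Hj & _).
    rewrite <- (nth_map_seq letter (N := N) Hj).
    assert (Hw := @seg_cmps_nth _ u ys (0, b) (a * snd k) (letter 0) Hl Hd ltac:(lia)).
    apply (seg_cmpr (q := cmps u (repeat x N))) in Hw; [| composable].
    apply (seg_cmpl (mu := cmps u (repeat x i))) in Hw; [| composable].
    apply (seg_eq Hw); rewrite DX; unfold i; rewrite <- Hk1; deg_arith. }
  exists z. split; [unfold z; apply loop_cmp; [| apply loop_cmp]; auto using loop_cmps |].
  exists d0, (a * b), (0, b), (letter (a * snd m)), (letter (a * snd n)).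
  refine (conj _ (conj (Hwin m eq_refl ltac:(lia)) (conj (Hwin n (eq_sym Hm1) ltac:(lia)) _))).
  - unfold z. rewrite !deg_cmp, !DX, (deg_cmps (d := (0, b))), Hlen by (auto; composable).
    destruct (window_arith Ha Hb (k := fst m) (M := M) ltac:(lia)) as (_ & _ & B1 & _).
    destruct (window_arith Ha Hb (k := Nat.max (snd m) (snd n)) (M := M) ltac:(lia))
      as (_ & _ & _ & B2).
    unfold djoin at 1. rewrite <- Hm1, Nat.max_id.
    unfold N. deg_arith.
  - unfold letter. rewrite Nat.eqb_refl.
    replace (a * snd n =? a * snd m) with false; [exact (not_eq_sym Hne) |].
    symmetry. apply Nat.eqb_neq. intros E. apply Hm2, (Nat.mul_cancel_l _ _ a); lia.
Qed.

End Separation.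

Lemma quartet_windows_differ (L : TwoGraph) a b u (al1 al2 be1 be2 : Mor L) m n :
  aperiodic_quartet L a b u al1 al2 be1 be2 -> m <> n ->
  exists z, loop u z /\ shifted_windows_differ z m n.
Proof.
  intros (Ha & Hb & (? & ? & D1) & (? & ? & D2) & (? & ? & D3) & (? & ? & D4) &
          Hal & Hbe & C1 & C2 & _) Hmn.
  destruct (Nat.eq_dec (fst m) (fst n)) as [E | E].
  - apply (windows_differ_vertical Ha Hb (x := al1) (y1 := be1) (y2 := be2));
      try split; auto.
    intros E'. apply Hmn, injective_projections; assumption.
  - apply (windows_differ_horizontal Ha Hb (x1 := al1) (x2 := al2) (y := be2));
      try split; auto.
Qed.

Theorem proposition3p7 (L : TwoGraph) :
  row_finite L -> no_sources L ->
  (forall v : Obj L, exists u : Obj L,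
      (exists l : Mor L, rng l = v /\ src l = u) /\ has_aperiodic_quartet L u) ->
  aperiodic L.
Proof.
  intros _ _ Hreach v m n Hmn.
  destruct (Hreach v) as (u & (mu & Hmu & Hsrc) & a & b & al1 & al2 & be1 & be2 & Hq).
  destruct (quartet_windows_differ Hq Hmn) as (z & [Hz _] & Hw).
  exists (cmp mu z). split; [rewrite rng_cmp; congruence |].
  apply shifted_windows_differ_periodicity, shifted_windows_differ_cmpl; [congruence | exact Hw].
Qed.
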